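(* Let $\underline s\in\overline{\mathcal S}$. Let $\underline u$ be either an infinite sequence of integers or a finite sequence of integers followed by the symbol $*$, and suppose that $\sigma^k(\underline u)\notin\{\mathbb K^+(\underline s),\mathbb K^-(\underline s)\}$ for all $k\geq 1$. Then there exists an external address $\underline r\in\overline{\mathcal S}$ with $\operatorname{itin}_{\underline s}(\underline r)=\underline u$; if $\underline u$ is periodic, then every such $\underline r$ is periodic. Furthermore, if $\underline t\in\overline{\mathcal S}$ and $k\geq 0$, then no two distinct elements of $\sigma^{-k}(\underline t)$ have the same itinerary with respect to $\underline s$. In particular, no two distinct intermediate external addresses have the same itinerary with respect to $\underline s$.
   Context: External addresses. An infinite external address is a sequence $\underline s=s_1s_2s_3\dots$ of integers. For $n\ge 2$, an intermediate external address of length $n$ is a finite string $s_1s_2\dots s_{n-1}\infty$ with $s_1,\dots,s_{n-2}\in\mathbb Z$ and $s_{n-1}\in\mathbb Z+\tfrac12$; the single symbol $\infty$ is the intermediate external address of length $1$. Let $\overline{\mathcal S}$ be the set of all infinite and intermediate external addresses and $\dot{\mathcal S}=\overline{\mathcal S}\setminus\{\infty\}$. $\dot{\mathcal S}$ is totally ordered lexicographically (entries compared as real numbers). $\overline{\mathcal S}$ carries the circular order obtained by adding $\infty$ as a single point lying above and below all of $\dot{\mathcal S}$. The shift $\sigma:\dot{\mathcal S}\to\overline{\mathcal S}$ deletes the first entry (so $\sigma(s_1\infty)=\infty$). For a number $j$ and an address $\underline t$, $j\underline t$ denotes the address with first entry $j$ followed by the entries of $\underline t$. A sequence is periodic if it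 is fixed by some iterate $\sigma^n$, $n\ge1$. Itineraries. For $\underline s\in\dot{\mathcal S}$ and $\underline r\in\overline{\mathcal S}$, $\operatorname{itin}_{\underline s}(\underline r)=u_1u_2\dots$ is defined by: $u_k=j\in\mathbb Z$ if $j\underline s<\sigma^{k-1}(\underline r)<(j+1)\underline s$; $u_k$ is the boundary symbol $\binom{j}{j-1}$ if $\sigma^{k-1}(\underline r)=j\underline s$ ($j\in\mathbb Z$); $u_k=*$ if $\sigma^{k-1}(\underline r)=\infty$, in which case the itinerary terminates with this entry. For $\underline s=\infty$ the same definition is used with $j\underline s,(j+1)\underline s$ replaced by $(j-\frac12)\infty,(j+\frac12)\infty$. The sequences $\operatorname{itin}^+_{\underline s}(\underline r)$, $\operatorname{itin}^-_{\underline s}(\underline r)$ are obtained by replacing every boundary symbol $\binom{j}{j-1}$ by $j$, respectively by $j-1$. The kneading sequence of $\underline s$ is $\mathbb K(\underline s)=\operatorname{itin}_{\underline s}(\underline s)$, and $\mathbb K^{\pm}(\underline s)=\operatorname{itin}^{\pm}_{\underline s}(\underline s)$. On symbol sequences, $\sigma$ also denotes the shift deleting the first entry. *)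

From Stdlib Require Import ZArith List.
Import ListNotations.
Open Scope Z_scope.

(** External addresses (the set \overline{S}).
    - [AInf f]   : the infinite address f 0, f 1, f 2, ...  (so s_{k+1} = f k)
    - [AInt l h] : the intermediate address  l_1 ... l_m (h+1/2) ∞
                   of length m+2 (all l_i integers, last finite entry h + 1/2)
    - [AInfty]   : the intermediate address ∞ of length 1. *)
Inductive addr : Type :=
| AInf (f : nat -> Z)
| AInt (l : list Z) (h : Z)
| AInfty.

(** The i-th finite entry (0-indexed), doubled so that it is an integer:
    integer j ↦ 2j, half-integer h+1/2 ↦ 2h+1; [None] for the symbol ∞. *)
Definition entry (a : addr) (i : nat) : option Z :=
  match a with
  | AInf f => Some (2 * f i)
  | AInt l h =>
      if (i <? length l)%nat then Some (2 * nth i l 0)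
      else if (i =? length l)%nat then Some (2 * h + 1) else None
  | AInfty => None
  end.

(** Lexicographic (strict) order on \dot S, entries compared as reals.
    (Two distinct elements of \dot S always first differ at a finite entry.) *)
Definition addr_lt (a b : addr) : Prop :=
  exists k, (forall i, (i < k)%nat -> entry a i = entry b i) /\
    exists x y, entry a k = Some x /\ entry b k = Some y /\ x < y.

(** The shift σ (deletes the first entry; σ(s_1 ∞) = ∞).  σ(∞) is undefined
    in the paper; here it is set to ∞ but it is only ever used on \dot S. *)
Definition shift (a : addr) : addr :=
  match a with
  | AInf f => AInf (fun n => f (S n))
  | AInt [] _ => AInfty
  | AInt (_ :: l) h => AInt l h
  | AInfty => AInfty
  end.

(** j t : prepend the integer j (only used for t in \dot S). *)
Definition acons (j : Z) (a : addr) : addr :=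
  match a with
  | AInf f => AInf (fun n => match n with O => j | S m => f m end)
  | AInt l h => AInt (j :: l) h
  | AInfty => AInfty
  end.

(** Boundary points of the itinerary partition w.r.t. s:
    j s for s in \dot S, and (j - 1/2)∞ for s = ∞. *)
Definition bnd (s : addr) (j : Z) : addr :=
  match s with
  | AInfty => AInt [] (j - 1)
  | _ => acons j s
  end.

(** Itinerary symbols: an integer j, or the boundary symbol (j over j-1). *)
Inductive isym : Type :=
| ISym (j : Z)
| IBnd (j : Z).

Definition sym_at (s x : addr) (e : isym) : Prop :=
  x <> AInfty /\
  match e with
  | ISym j => addr_lt (bnd s j) x /\ addr_lt x (bnd s (j + 1))
  | IBnd j => x = bnd s j
  end.

Inductive sseq (A : Type) : Type :=
| SInf (f : nat -> A)
| SFin (l : list A).   (* l_1 ... l_m * *)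
Arguments SInf {A} f.
Arguments SFin {A} l.

Definition smap {A B : Type} (g : A -> B) (u : sseq A) : sseq B :=
  match u with
  | SInf f => SInf (fun n => g (f n))
  | SFin l => SFin (map g l)
  end.

(** σ^k on symbol sequences; [None] when σ^k is undefined
    (k larger than the number of entries minus one). *)
Definition sshiftn {A : Type} (k : nat) (u : sseq A) : option (sseq A) :=
  match u with
  | SInf f => Some (SInf (fun n => f (n + k)%nat))
  | SFin l => if (k <=? length l)%nat then Some (SFin (skipn k l)) else None
  end.

Definition speriodic {A : Type} (u : sseq A) : Prop :=
  exists n, (1 <= n)%nat /\ sshiftn n u = Some u.

Definition Itin (s r : addr) (v : sseq isym) : Prop :=
  match v with
  | SInf f => forall k, sym_at s (Nat.iter k shift r) (f k)
  | SFin l =>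
      (forall k, (k < length l)%nat ->
         sym_at s (Nat.iter k shift r) (nth k l (ISym 0))) /\
      Nat.iter (length l) shift r = AInfty
  end.

Definition splus (e : isym) : Z := match e with ISym j => j | IBnd j => j end.
Definition sminus (e : isym) : Z := match e with ISym j => j | IBnd j => j - 1 end.

Definition aperiodic (r : addr) : Prop :=
  r <> AInfty /\ exists n, (1 <= n)%nat /\ Nat.iter n shift r = r.

Definition in_preimage (k : nat) (t r : addr) : Prop :=
  (forall j, (j < k)%nat -> Nat.iter j shift r <> AInfty) /\
  Nat.iter k shift r = t.

Definition is_intermediate (r : addr) : Prop :=
  match r with AInf _ => False | _ => True end.

(* For [s <> ∞], an address with shift [y] has symbol [j] w.r.t. [s] iff it is
   [(j+1/2)∞] (when [y = ∞]), [j y] with [y > s], or [(j+1) y] with [y < s]. Hence every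
   [y <> s] has a pullback with any prescribed symbol, and pullbacks with the same symbol
   coincide; descending from [σ^k r = t] gives the uniqueness statements, and pulling back
   [∞] realises finite itineraries. An infinite [u] is realised by a cluster point of finite
   approximations whose orbits avoid [s]; if the limit landed on [s], the approximants would
   approach [s] from one side, making a shift of [u] equal to [K^+(s)] or [K^-(s)]. For
   periodic [u], a bounded window of later entries of a solution determines the earlier ones
   (two solutions splitting at [m] would squeeze [s] and match [K(s)] for too long), so the
   windows of a solution recur periodically, and so does the solution. *)

From Stdlib Require Import ZArith List Lia FunctionalExtensionality ClassicalEpsilon.
Import ListNotations.
Open Scope Z_scope.

Lemma Some_inj {A} (x y : A) : Some x = Some y -> x = y.
Proof. congruence. Qed.

Lemma entry_shift a i : entry (shift a) i = entry a (S i).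
Proof. destruct a as [f| [|x l] h|]; reflexivity. Qed.

Lemma entry_iter_shift n a i : entry (Nat.iter n shift a) i = entry a (i + n).
Proof.
  revert i; induction n as [|n IH]; intro i.
  - now rewrite Nat.add_0_r.
  - rewrite Nat.iter_succ, entry_shift, IH. f_equal. lia.
Qed.

Lemma entry_AInt_lt l h i :
  (i < length l)%nat -> entry (AInt l h) i = Some (2 * nth i l 0).
Proof. intro H. unfold entry. now rewrite (proj2 (Nat.ltb_lt _ _) H). Qed.

Lemma entry_AInt_length l h : entry (AInt l h) (length l) = Some (2 * h + 1).
Proof. unfold entry. now rewrite Nat.ltb_irrefl, Nat.eqb_refl. Qed.

Lemma entry_AInt_gt l h i : (length l < i)%nat -> entry (AInt l h) i = None.
Proof.
  intro H. unfold entry. destruct (Nat.ltb_spec i (length l)); [lia|].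
  destruct (Nat.eqb_spec i (length l)); [lia|reflexivity].
Qed.

Lemma entry_after_odd a t h i :
  entry a t = Some (2 * h + 1) -> (t < i)%nat -> entry a i = None.
Proof.
  intros E Hi. destruct a as [f|l h'|]; unfold entry in E.
  - apply Some_inj in E; lia.
  - destruct (Nat.ltb_spec t (length l)); [apply Some_inj in E; lia|].
    destruct (Nat.eqb_spec t (length l)); [|discriminate].
    apply entry_AInt_gt; lia.
  - discriminate.
Qed.

Lemma entry_none_after_odd a i :
  a <> AInfty -> entry a i = None -> exists t h, (t < i)%nat /\ entry a t = Some (2 * h + 1).
Proof.
  intros Ha E. destruct a as [f|l h|]; [discriminate| |easy].
  exists (length l), h. split; [|apply entry_AInt_length].
  destruct (Nat.lt_total i (length l)) as [H|[->|H]]; trivial.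
  - now rewrite entry_AInt_lt in E.
  - now rewrite entry_AInt_length in E.
Qed.

Lemma addr_eq_entries a b :
  a <> AInfty -> b <> AInfty -> (forall i, entry a i = entry b i) -> a = b.
Proof.
  intros Ha Hb E.
  assert (Hinf : forall f l h, entry (AInf f) (length l) <> entry (AInt l h) (length l)).
  { intros f l h Q. rewrite entry_AInt_length in Q. apply Some_inj in Q. lia. }
  destruct a as [f|l h|], b as [g|l' h'|]; try easy.
  - f_equal. apply functional_extensionality. intro i.
    specialize (E i). cbn [entry] in E. apply Some_inj in E. lia.
  - now destruct (Hinf f l' h').
  - now destruct (Hinf g l h).
  - assert (Hl : length l = length l').
    { destruct (Nat.lt_total (length l) (length l')) as [H|[H|H]]; trivial.
      - specialize (E (length l)). rewrite entry_AInt_length, entry_AInt_lt in E by exact H.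
        apply Some_inj in E. lia.
      - specialize (E (length l')). rewrite entry_AInt_length, entry_AInt_lt in E by exact H.
        apply Some_inj in E. lia. }
    assert (Hh : h = h').
    { specialize (E (length l)). rewrite entry_AInt_length, Hl, entry_AInt_length in E.
      apply Some_inj in E. lia. }
    subst h'. f_equal. apply nth_ext with 0 0; trivial. intros n Hn.
    specialize (E n). rewrite !entry_AInt_lt in E by lia. apply Some_inj in E. lia.
Qed.

Lemma iter_shift_AInf n f : Nat.iter n shift (AInf f) = AInf (fun i => f (i + n)%nat).
Proof.
  induction n as [|n IH].
  - cbn. f_equal. apply functional_extensionality. intro i. now rewrite Nat.add_0_r.
  - rewrite Nat.iter_succ, IH. cbn. f_equal. apply functional_extensionality. intro i. f_equal. lia.
Qed.

Lemma iter_shift_AInfty n : Nat.iter n shift AInfty = AInfty.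
Proof. induction n as [|n IH]; [|rewrite Nat.iter_succ, IH]; reflexivity. Qed.

Lemma iter_shift_AInt l h : Nat.iter (S (length l)) shift (AInt l h) = AInfty.
Proof. induction l as [|x l IH]; [reflexivity|]. cbn [length]. now rewrite Nat.iter_succ_r. Qed.

Lemma is_intermediate_iter_shift n a :
  is_intermediate a -> is_intermediate (Nat.iter n shift a).
Proof.
  induction n as [|n IH]; trivial.
  intro Ha. specialize (IH Ha). rewrite Nat.iter_succ.
  destruct (Nat.iter n shift a) as [f| [|x l] h|]; easy.
Qed.

Lemma iter_shift_not_infty_le m n a :
  (m <= n)%nat -> Nat.iter n shift a <> AInfty -> Nat.iter m shift a <> AInfty.
Proof.
  intros Hmn Hn Hm. apply Hn. replace n with (n - m + m)%nat by lia.
  now rewrite Nat.iter_add, Hm, iter_shift_AInfty.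
Qed.

(** * The lexicographic order *)

Lemma addr_lt_irrefl a : ~ addr_lt a a.
Proof. intros [k [_ [x [y [Ea [Eb Hxy]]]]]]. rewrite Ea in Eb. apply Some_inj in Eb. lia. Qed.

Lemma addr_lt_trans a b c : addr_lt a b -> addr_lt b c -> addr_lt a c.
Proof.
  intros [k1 [A1 [x1 [y1 [E1 [F1 L1]]]]]] [k2 [A2 [x2 [y2 [E2 [F2 L2]]]]]].
  destruct (Nat.lt_total k1 k2) as [H|[<-|H]].
  - exists k1. split; [intros i Hi; rewrite A1, A2 by lia; reflexivity|].
    exists x1, y1. rewrite <- A2 by exact H. auto.
  - exists k1. split; [intros i Hi; rewrite A1, A2 by lia; reflexivity|].
    rewrite F1 in E2. apply Some_inj in E2. subst. exists x1, y2. repeat split; auto. lia.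
  - exists k2. split; [intros i Hi; rewrite A1, A2 by lia; reflexivity|].
    exists x2, y2. rewrite A1 by exact H. auto.
Qed.

Lemma addr_lt_asym a b : addr_lt a b -> ~ addr_lt b a.
Proof. intros H1 H2. exact (addr_lt_irrefl _ (addr_lt_trans _ _ _ H1 H2)). Qed.

Lemma addr_lt_not_infty a b : addr_lt a b -> a <> AInfty /\ b <> AInfty.
Proof. intros [k [_ [x [y [Ea [Eb _]]]]]]. split; intros ->; discriminate. Qed.

Lemma addr_lt_trichotomy a b :
  a <> AInfty -> b <> AInfty -> a = b \/ addr_lt a b \/ addr_lt b a.
Proof.
  intros Ha Hb. destruct (classic (forall i, entry a i = entry b i)) as [E|N].
  { left. now apply addr_eq_entries. }
  right. apply not_all_ex_not in N.
  destruct (dec_inh_nat_subset_has_unique_least_element _ (fun i => classic _) N)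
    as [t [[Dt Mt] _]].
  assert (Ag : forall i, (i < t)%nat -> entry a i = entry b i).
  { intros i Hi. apply NNPP. intro Ni. specialize (Mt i Ni). lia. }
  destruct (entry a t) as [x|] eqn:Ea, (entry b t) as [y|] eqn:Eb.
  - destruct (Z.lt_total x y) as [L|[->|L]]; [left|easy|right].
    + exists t. eauto 6.
    + exists t. split; [intros i Hi; symmetry; auto|]. eauto 6.
  - destruct (entry_none_after_odd b t Hb Eb) as [t0 [h [Ht0 Eo]]].
    rewrite <- Ag in Eo by exact Ht0. now rewrite (entry_after_odd a t0 h t Eo Ht0) in Ea.
  - destruct (entry_none_after_odd a t Ha Ea) as [t0 [h [Ht0 Eo]]].
    rewrite Ag in Eo by exact Ht0. now rewrite (entry_after_odd b t0 h t Eo Ht0) in Eb.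
  - congruence.
Qed.

Lemma addr_lt_head a b x y :
  entry a 0 = Some x -> entry b 0 = Some y -> x < y -> addr_lt a b.
Proof. intros. exists 0%nat. split; [intros; lia|]. eauto. Qed.

Lemma addr_lt_head_le a b x y :
  addr_lt a b -> entry a 0 = Some x -> entry b 0 = Some y -> x <= y.
Proof.
  intros [[|k] [A [x' [y' [E1 [E2 L]]]]]] Ea Eb.
  - rewrite Ea in E1. rewrite Eb in E2. apply Some_inj in E1, E2. lia.
  - specialize (A 0%nat ltac:(lia)). rewrite Ea, Eb in A. apply Some_inj in A. lia.
Qed.

Lemma addr_lt_shift_iff a b :
  entry a 0 = entry b 0 -> addr_lt (shift a) (shift b) <-> addr_lt a b.
Proof.
  intro E0. split.
  - intros [k [A [x [y [E1 [E2 L]]]]]]. exists (S k). split.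
    + intros [|i] Hi; trivial. rewrite <- !entry_shift. apply A. lia.
    + exists x, y. rewrite <- !entry_shift. auto.
  - intros [[|k] [A [x [y [E1 [E2 L]]]]]].
    + rewrite E1, E2 in E0. apply Some_inj in E0. lia.
    + exists k. split; [intros i Hi; rewrite !entry_shift; apply A; lia|].
      exists x, y. rewrite !entry_shift. auto.
Qed.

Definition agree (K : nat) (a b : addr) : Prop :=
  forall i, (i < K)%nat -> entry a i = entry b i.

Lemma agree_sym K a b : agree K a b -> agree K b a.
Proof. intros H i Hi. symmetry. auto. Qed.

Lemma agree_weaken K K' a b : (K' <= K)%nat -> agree K a b -> agree K' a b.
Proof. intros L H i Hi. apply H. lia. Qed.

Lemma agree_iter_shift K n a b :
  agree K a b -> agree (K - n) (Nat.iter n shift a) (Nat.iter n shift b).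
Proof. intros H i Hi. rewrite !entry_iter_shift. apply H. lia. Qed.

Lemma addr_lt_open_l a e :
  addr_lt a e -> exists B, forall c, agree B c a -> addr_lt c e.
Proof.
  intros [k [A [x [y [E1 [E2 L]]]]]]. exists (S k). intros c H.
  exists k. split; [intros i Hi; rewrite H by lia; auto|].
  exists x, y. rewrite H by lia. auto.
Qed.

Lemma addr_lt_open_r a e :
  addr_lt e a -> exists B, forall c, agree B c a -> addr_lt e c.
Proof.
  intros [k [A [x [y [E1 [E2 L]]]]]]. exists (S k). intros c H.
  exists k. split; [intros i Hi; rewrite H by lia; auto|].
  exists x, y. rewrite H by lia. auto.
Qed.

Lemma agree_between K a b c :
  addr_lt a c -> addr_lt c b -> agree K a b -> agree K a c.
Proof.
  intros [k1 [A1 [x1 [y1 [E1 [F1 L1]]]]]] [k2 [A2 [x2 [y2 [E2 [F2 L2]]]]]] H i Hi.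
  destruct (Nat.lt_ge_cases i k1) as [Hk|Hk]; [auto|exfalso].
  destruct (Nat.lt_total k2 k1) as [G|[<-|G]].
  - rewrite <- A1, H in E2 by lia. rewrite F2 in E2. apply Some_inj in E2. lia.
  - rewrite H in E1 by lia. rewrite F2 in E1. rewrite F1 in E2.
    apply Some_inj in E1, E2. lia.
  - rewrite A2, <- H in F1 by lia. rewrite E1 in F1. apply Some_inj in F1. lia.
Qed.

Lemma addr_lt_iter_shift K n a b :
  addr_lt a b -> agree K a b -> (n < K)%nat ->
  addr_lt (Nat.iter n shift a) (Nat.iter n shift b).
Proof.
  intros L A. induction n as [|n IH]; intro H; trivial.
  rewrite !Nat.iter_succ. apply addr_lt_shift_iff; [|apply IH; lia].
  rewrite !entry_iter_shift. apply A. lia.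
Qed.

Lemma not_lt_of_approx_above a x :
  (forall K, exists c, agree K c x /\ addr_lt a c) -> ~ addr_lt x a.
Proof.
  intros Hc L. destruct (addr_lt_open_l _ _ L) as [B HB].
  destruct (Hc B) as [c [Ac Lc]]. exact (addr_lt_asym _ _ Lc (HB c Ac)).
Qed.

Lemma not_lt_of_approx_below a x :
  (forall K, exists c, agree K c x /\ addr_lt c a) -> ~ addr_lt a x.
Proof.
  intros Hc L. destruct (addr_lt_open_r _ _ L) as [B HB].
  destruct (Hc B) as [c [Ac Lc]]. exact (addr_lt_asym _ _ Lc (HB c Ac)).
Qed.

(** * Itinerary symbols *)

Lemma entry_acons_0 j a : a <> AInfty -> entry (acons j a) 0 = Some (2 * j).
Proof. destruct a; easy. Qed.

Lemma shift_acons j a : shift (acons j a) = a.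
Proof. destruct a; reflexivity. Qed.

Lemma acons_not_infty j a : a <> AInfty -> acons j a <> AInfty.
Proof. destruct a; easy. Qed.

Lemma bnd_acons s j : s <> AInfty -> bnd s j = acons j s.
Proof. destruct s; easy. Qed.

Lemma acons_head_shift x : shift x <> AInfty -> exists j, x = acons j (shift x).
Proof.
  destruct x as [f| [|j l] h|]; intro H; try easy.
  - exists (f 0%nat). cbn. f_equal. apply functional_extensionality. now intros [|n].
  - now exists j.
Qed.

Lemma shift_infty x : x <> AInfty -> shift x = AInfty -> exists h, x = AInt [] h.
Proof. destruct x as [f| [|j l] h|]; intros; try easy. now exists h. Qed.

Lemma acons_lt_head j j' a b :
  a <> AInfty -> b <> AInfty -> j < j' -> addr_lt (acons j a) (acons j' b).
Proof. intros. apply addr_lt_head with (2 * j) (2 * j'); try apply entry_acons_0; auto; lia. Qed.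

Lemma acons_lt_iff j a b :
  a <> AInfty -> b <> AInfty -> addr_lt (acons j a) (acons j b) <-> addr_lt a b.
Proof.
  intros Ha Hb. rewrite <- addr_lt_shift_iff, !shift_acons; [reflexivity|].
  now rewrite !entry_acons_0.
Qed.

Lemma bnd_lt s j k : j < k -> addr_lt (bnd s j) (bnd s k).
Proof.
  intro H. destruct (classic (s = AInfty)) as [->|Hs].
  - apply addr_lt_head with (2 * (j - 1) + 1) (2 * (k - 1) + 1); trivial. lia.
  - rewrite !bnd_acons by exact Hs. now apply acons_lt_head.
Qed.

Lemma sym_at_ISym_unique s c j k : sym_at s c (ISym j) -> sym_at s c (ISym k) -> j = k.
Proof.
  assert (Hlt : forall j k, j < k -> sym_at s c (ISym j) -> ~ sym_at s c (ISym k)).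
  { intros j' k' H [_ [_ U]] [_ [L _]].
    destruct (Z.eq_dec (j' + 1) k') as [<-|N].
    - exact (addr_lt_asym _ _ U L).
    - exact (addr_lt_asym _ _ (addr_lt_trans _ _ _ U (bnd_lt s (j' + 1) k' ltac:(lia))) L). }
  intros Hj Hk. destruct (Z.lt_total j k) as [H|[H|H]]; trivial.
  - now destruct (Hlt j k H Hj).
  - now destruct (Hlt k j H Hk).
Qed.

Lemma sym_at_ISym_iff s x j : s <> AInfty ->
  sym_at s x (ISym j) <->
  x = AInt [] j \/ (exists y, addr_lt s y /\ x = acons j y) \/
  (exists y, addr_lt y s /\ x = acons (j + 1) y).
Proof.
  intro Hs. unfold sym_at. rewrite !bnd_acons by exact Hs. split.
  - intros [Hx [L U]].
    destruct (classic (shift x = AInfty)) as [Hy|Hy].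
    + destruct (shift_infty x Hx Hy) as [h ->]. left.
      pose proof (addr_lt_head_le _ _ _ _ L (entry_acons_0 _ _ Hs) eq_refl).
      pose proof (addr_lt_head_le _ _ _ _ U eq_refl (entry_acons_0 _ _ Hs)).
      f_equal. lia.
    + destruct (acons_head_shift x Hy) as [a Ex]. remember (shift x) as y.
      rewrite Ex in L, U.
      pose proof (addr_lt_head_le _ _ _ _ L (entry_acons_0 _ _ Hs) (entry_acons_0 _ _ Hy)).
      pose proof (addr_lt_head_le _ _ _ _ U (entry_acons_0 _ _ Hy) (entry_acons_0 _ _ Hs)).
      assert (a = j \/ a = j + 1) as [->| ->] by lia; right; [left|right]; exists y;
        split; trivial.
      * now apply (acons_lt_iff j).
      * now apply (acons_lt_iff (j + 1)).
  - intros [->|[[y [Hy ->]]|[y [Hy ->]]]].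
    + split; [easy|]. split; [apply addr_lt_head with (2 * j) (2 * j + 1)|
              apply addr_lt_head with (2 * j + 1) (2 * (j + 1))];
        try apply entry_acons_0; auto; lia.
    + destruct (addr_lt_not_infty _ _ Hy) as [_ Hy'].
      split; [now apply acons_not_infty|].
      split; [now apply acons_lt_iff|apply acons_lt_head; auto; lia].
    + destruct (addr_lt_not_infty _ _ Hy) as [Hy' _].
      split; [now apply acons_not_infty|].
      split; [apply acons_lt_head; auto; lia|now apply acons_lt_iff].
Qed.

Lemma sym_at_infty_ISym_iff x j :
  sym_at AInfty x (ISym j) <-> exists y, y <> AInfty /\ x = acons j y.
Proof.
  unfold sym_at; cbn [bnd]. replace (j + 1 - 1) with j by lia. split.
  - intros [Hx [L U]].
    destruct (classic (shift x = AInfty)) as [Hy|Hy].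
    + destruct (shift_infty x Hx Hy) as [h ->]. exfalso.
      pose proof (addr_lt_head_le _ _ _ _ L eq_refl eq_refl).
      pose proof (addr_lt_head_le _ _ _ _ U eq_refl eq_refl).
      assert (h = j - 1 \/ h = j) as [->| ->] by lia; eapply addr_lt_irrefl; eauto.
    + destruct (acons_head_shift x Hy) as [a Ex]. exists (shift x). split; trivial.
      remember (shift x) as y. rewrite Ex in L, U |- *.
      pose proof (addr_lt_head_le _ _ _ _ L eq_refl (entry_acons_0 _ _ Hy)).
      pose proof (addr_lt_head_le _ _ _ _ U (entry_acons_0 _ _ Hy) eq_refl).
      f_equal. lia.
  - intros [y [Hy ->]]. split; [now apply acons_not_infty|].
    split; [apply addr_lt_head with (2 * (j - 1) + 1) (2 * j)|
            apply addr_lt_head with (2 * j) (2 * j + 1)]; try apply entry_acons_0; auto; lia.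
Qed.

Lemma sym_at_ISym_even_head s c j k : s <> AInfty ->
  sym_at s c (ISym j) -> entry c 0 = Some (2 * k) ->
  (k = j /\ addr_lt s (shift c)) \/ (k = j + 1 /\ addr_lt (shift c) s).
Proof.
  intros Hs Hc Ec. apply sym_at_ISym_iff in Hc as [->|[[y [Hy ->]]|[y [Hy ->]]]]; trivial.
  - change (entry (AInt [] j) 0) with (Some (2 * j + 1)) in Ec. apply Some_inj in Ec. lia.
  - destruct (addr_lt_not_infty _ _ Hy).
    rewrite entry_acons_0 in Ec by trivial. apply Some_inj in Ec. left.
    rewrite shift_acons. split; [lia|exact Hy].
  - destruct (addr_lt_not_infty _ _ Hy).
    rewrite entry_acons_0 in Ec by trivial. apply Some_inj in Ec. right.
    rewrite shift_acons. split; [lia|exact Hy].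
Qed.

Lemma sym_at_shift_inj s x x' e :
  shift x = shift x' -> sym_at s x e -> sym_at s x' e -> x = x'.
Proof.
  destruct e as [j|j]; [|intros _ [_ ->] [_ ->]; reflexivity].
  destruct (classic (s = AInfty)) as [->|Hs].
  - rewrite !sym_at_infty_ISym_iff. intros E [y [_ ->]] [y' [_ ->]].
    rewrite !shift_acons in E. now subst.
  - rewrite !(sym_at_ISym_iff s _ j Hs).
    intros E [->|[[y [Hy ->]]|[y [Hy ->]]]] [->|[[y' [Hy' ->]]|[y' [Hy' ->]]]];
      cbn [shift] in E; rewrite ?shift_acons in E; subst; trivial; exfalso;
      solve [ now destruct (addr_lt_not_infty _ _ Hy)
            | now destruct (addr_lt_not_infty _ _ Hy')
            | now apply (addr_lt_asym _ _ Hy) ].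
Qed.

Lemma sym_at_pullback s y j : s <> AInfty -> y <> AInfty -> y <> s ->
  exists j', sym_at s (acons j' y) (ISym j).
Proof.
  intros Hs Hy Hys. setoid_rewrite (sym_at_ISym_iff s _ j Hs).
  destruct (addr_lt_trichotomy y s Hy Hs) as [E|[L|L]]; [contradiction| |].
  - exists (j + 1). right; right. eauto.
  - exists j. right; left. eauto.
Qed.

Lemma sym_at_exists s x : s <> AInfty -> x <> AInfty -> exists e, sym_at s x e.
Proof.
  intros Hs Hx. destruct (classic (shift x = AInfty)) as [Hy|Hy].
  - destruct (shift_infty x Hx Hy) as [h ->]. exists (ISym h).
    apply sym_at_ISym_iff; auto.
  - destruct (acons_head_shift x Hy) as [a Ex]. remember (shift x) as y.
    destruct (addr_lt_trichotomy y s Hy Hs) as [->|[L|L]].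
    + exists (IBnd a). split; trivial. now rewrite bnd_acons.
    + exists (ISym (a - 1)). apply sym_at_ISym_iff; trivial.
      right; right. exists y. replace (a - 1 + 1) with a by lia. auto.
    + exists (ISym a). apply sym_at_ISym_iff; trivial. right; left. eauto.
Qed.

Lemma sym_at_between s a b x k :
  sym_at s a (ISym k) -> sym_at s b (ISym k) -> addr_lt a x -> addr_lt x b ->
  sym_at s x (ISym k).
Proof.
  intros [_ [La _]] [_ [_ Ub]] Hax Hxb. split; [exact (proj2 (addr_lt_not_infty _ _ Hax))|].
  split; eapply addr_lt_trans; eauto.
Qed.

Lemma sym_at_ISym_open s a k : sym_at s a (ISym k) ->
  exists B, forall c j, agree B c a -> sym_at s c (ISym j) -> j = k.
Proof.
  intros [_ [L U]].
  destruct (addr_lt_open_r _ _ L) as [B1 HB1], (addr_lt_open_l _ _ U) as [B2 HB2].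
  exists (B1 + B2)%nat. intros c j Ac Hc. apply (sym_at_ISym_unique s c); trivial.
  split; [exact (proj1 Hc)|].
  split; [apply HB1|apply HB2]; apply (agree_weaken (B1 + B2)); trivial; lia.
Qed.

(* One-sided continuity of itineraries: from the right (left) the boundary symbol
   counts as its upper (lower) value. *)
Lemma sym_at_right_nbhd s a e : s <> AInfty -> sym_at s a e ->
  exists B, forall c j, agree B c a -> addr_lt a c -> sym_at s c (ISym j) -> j = splus e.
Proof.
  intros Hs Ha. destruct e as [k|k]; cbn [splus].
  - destruct (sym_at_ISym_open s a k Ha) as [B HB]. eauto.
  - destruct Ha as [_ ->]. rewrite bnd_acons by exact Hs. exists 1%nat. intros c j Ac L Hc.
    assert (Ec : entry c 0 = Some (2 * k)).
    { rewrite Ac by lia. now apply entry_acons_0. }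
    destruct (sym_at_ISym_even_head s c j k Hs Hc Ec) as [[-> _]|[_ Lc]]; trivial.
    exfalso. apply (addr_lt_asym _ _ Lc).
    rewrite <- (shift_acons k s) at 1. apply addr_lt_shift_iff; trivial.
    rewrite Ec. now apply entry_acons_0.
Qed.

Lemma sym_at_left_nbhd s a e : s <> AInfty -> sym_at s a e ->
  exists B, forall c j, agree B c a -> addr_lt c a -> sym_at s c (ISym j) -> j = sminus e.
Proof.
  intros Hs Ha. destruct e as [k|k]; cbn [sminus].
  - destruct (sym_at_ISym_open s a k Ha) as [B HB]. eauto.
  - destruct Ha as [_ ->]. rewrite bnd_acons by exact Hs. exists 1%nat. intros c j Ac L Hc.
    assert (Ec : entry c 0 = Some (2 * k)).
    { rewrite Ac by lia. now apply entry_acons_0. }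
    destruct (sym_at_ISym_even_head s c j k Hs Hc Ec) as [[_ Lc]|[-> _]]; [|lia].
    exfalso. apply (addr_lt_asym _ _ Lc).
    rewrite <- (shift_acons k s) at 1. apply addr_lt_shift_iff; trivial.
    rewrite Ec. symmetry. now apply entry_acons_0.
Qed.

(** * Uniqueness and finite itineraries *)

Lemma itin_common_symbol s r r' v j :
  Itin s r v -> Itin s r' v -> Nat.iter j shift r <> AInfty ->
  exists e, sym_at s (Nat.iter j shift r) e /\ sym_at s (Nat.iter j shift r') e.
Proof.
  destruct v as [f|l]; intros I I' Hj.
  - exists (f j). auto.
  - destruct I as [I1 I2], I' as [I1' _].
    destruct (Nat.lt_ge_cases j (length l)) as [Lt|Ge].
    + exists (nth j l (ISym 0)). auto.
    + exfalso. exact (iter_shift_not_infty_le _ _ _ Ge Hj I2).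
Qed.

Lemma itin_preimage_unique s t k r r' v :
  in_preimage k t r -> in_preimage k t r' -> Itin s r v -> Itin s r' v -> r = r'.
Proof.
  intros [P1 P2] [P1' P2'] I I'.
  assert (H : forall d, (d <= k)%nat -> Nat.iter (k - d) shift r = Nat.iter (k - d) shift r').
  { induction d as [|d IH]; intro Hd.
    - now rewrite Nat.sub_0_r, P2, P2'.
    - set (j := (k - S d)%nat). replace (k - d)%nat with (S j) in IH by lia.
      rewrite !Nat.iter_succ in IH.
      destruct (itin_common_symbol s r r' v j I I' (P1 j ltac:(lia))) as [e [S1 S2]].
      exact (sym_at_shift_inj s _ _ e (IH ltac:(lia)) S1 S2). }
  specialize (H k (le_n k)). now rewrite Nat.sub_diag in H.
Qed.

Lemma itin_intermediate_unique s r r' v :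
  is_intermediate r -> is_intermediate r' -> Itin s r v -> Itin s r' v -> r = r'.
Proof.
  intros Ir Ir' I I'. destruct v as [f|l].
  - exfalso. destruct r as [g|l h|]; [easy| |].
    + destruct (I (S (length l))) as [N _]. apply N, iter_shift_AInt.
    + now destruct (I 0%nat).
  - apply (itin_preimage_unique s AInfty (length l) r r' (SFin l)); trivial;
      [destruct I as [I1 I2]|destruct I' as [I1 I2]];
      split; trivial; intros j Hj; exact (proj1 (I1 j Hj)).
Qed.

Lemma itin_fin_exists s l : s <> AInfty ->
  (forall k, (1 <= k <= length l)%nat -> ~ Itin s s (SFin (map ISym (skipn k l)))) ->
  exists r, Itin s r (SFin (map ISym l)).
Proof.
  intro Hs. induction l as [|a l IH]; intro H.
  - exists AInfty. split; [cbn; lia|reflexivity].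
  - destruct IH as [y [I1 I2]].
    { intros k Hk. apply (H (S k)). cbn. lia. }
    assert (Hys : y <> s).
    { intros ->. apply (H 1%nat); [cbn; lia|]. now split. }
    assert (Hx : exists x, shift x = y /\ sym_at s x (ISym a)).
    { destruct (classic (y = AInfty)) as [->|Hy].
      - exists (AInt [] a). split; trivial. apply sym_at_ISym_iff; auto.
      - destruct (sym_at_pullback s y a Hs Hy Hys) as [j Hj].
        exists (acons j y). split; trivial. apply shift_acons. }
    destruct Hx as [x [Sx Hx]]. exists x. split.
    + intros [|k] Hk; [exact Hx|]. rewrite Nat.iter_succ_r, Sx. apply I1. cbn in Hk. lia.
    + cbn [length map]. now rewrite Nat.iter_succ_r, Sx.
Qed.

Lemma sym_at_iter_AInf s f n j : s <> AInfty ->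
  sym_at s (Nat.iter n shift (AInf f)) (ISym j) ->
  (f n = j /\ addr_lt s (Nat.iter (S n) shift (AInf f))) \/
  (f n = j + 1 /\ addr_lt (Nat.iter (S n) shift (AInf f)) s).
Proof.
  intros Hs H. rewrite Nat.iter_succ.
  apply (sym_at_ISym_even_head s _ j (f n) Hs H).
  now rewrite entry_iter_shift.
Qed.

(** * Infinite itineraries *)

Lemma exists_off_orbit s : exists g, forall j, Nat.iter j shift s <> AInf g.
Proof.
  destruct s as [g0|l h|].
  - exists (fun j => g0 (j + j)%nat + 1). intros j E.
    rewrite iter_shift_AInf in E. injection E as E.
    apply (f_equal (fun g => g j)) in E. lia.
  - exists (fun _ => 0). intros j E.
    pose proof (is_intermediate_iter_shift j (AInt l h) I) as Q. now rewrite E in Q.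
  - exists (fun _ => 0). intro j. now rewrite iter_shift_AInfty.
Qed.

Lemma itin_approximant s g : s <> AInfty -> (forall j, Nat.iter j shift s <> AInf g) ->
  forall N u, exists f,
    Nat.iter N shift (AInf f) = AInf g /\
    (forall i, (i < N)%nat -> sym_at s (Nat.iter i shift (AInf f)) (ISym (u i))) /\
    (forall i, (i <= N)%nat -> Nat.iter i shift (AInf f) <> s).
Proof.
  intros Hs Hg. induction N as [|N IH]; intro u.
  - exists g. split; [reflexivity|]. split; [intros; lia|].
    intros i Hi E. apply (Hg 0%nat). replace i with 0%nat in E by lia. now rewrite <- E.
  - destruct (IH (fun i => u (S i))) as [f' [P1 [P2 P3]]].
    destruct (sym_at_pullback s (AInf f') (u 0%nat) Hs ltac:(easy) (P3 0%nat ltac:(lia)))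
      as [j Hx].
    exists (fun n => match n with O => j | S m => f' m end).
    change (AInf (fun n => match n with O => j | S m => f' m end)) with (acons j (AInf f')).
    split; [|split].
    + now rewrite Nat.iter_succ_r, shift_acons.
    + intros [|i] Hi; [exact Hx|]. rewrite Nat.iter_succ_r, shift_acons. apply P2. lia.
    + intros [|i] Hi.
      * intro E. change (acons j (AInf f') = s) in E. apply (Hg (S N)).
        rewrite <- E, Nat.iter_succ_r, shift_acons. exact P1.
      * rewrite Nat.iter_succ_r, shift_acons. apply P3. lia.
Qed.

Section ClusterPoint.
Variables (a b : nat -> Z) (F : nat -> nat -> Z).
Hypothesis two_valued : forall N i, (i < N)%nat -> F N i = a i \/ F N i = b i.

Definition frequent_prefix (l : list Z) : Prop :=
  forall M, exists N, (M <= N)%nat /\ forall i, (i < length l)%nat -> F N i = nth i l 0.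

Fixpoint greedy_prefix (k : nat) : list Z :=
  match k with
  | O => []
  | S k =>
      let l := greedy_prefix k in
      if excluded_middle_informative (frequent_prefix (l ++ [a (length l)]))
      then l ++ [a (length l)] else l ++ [b (length l)]
  end.

Lemma greedy_prefix_length k : length (greedy_prefix k) = k.
Proof.
  induction k as [|k IH]; trivial. cbn.
  destruct excluded_middle_informative; rewrite length_app, IH; cbn; lia.
Qed.

Lemma frequent_prefix_extend l :
  frequent_prefix l ->
  frequent_prefix (l ++ [a (length l)]) \/ frequent_prefix (l ++ [b (length l)]).
Proof.
  intro G. apply NNPP. intros [Na Nb]%not_or_and.
  apply not_all_ex_not in Na as [Ma Na], Nb as [Mb Nb].
  destruct (G (Nat.max Ma (Nat.max Mb (S (length l))))) as [N [HN HA]].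
  assert (Ext : forall x, F N (length l) = x ->
                forall i, (i < length (l ++ [x]))%nat -> F N i = nth i (l ++ [x]) 0).
  { intros x Ex i Hi. rewrite length_app in Hi. cbn in Hi.
    destruct (Nat.lt_ge_cases i (length l)).
    - rewrite app_nth1 by trivial. auto.
    - replace i with (length l) by lia. now rewrite nth_middle. }
  destruct (two_valued N (length l) ltac:(lia)) as [E|E]; [apply Na|apply Nb];
    exists N; split; [lia| |lia|]; now apply Ext.
Qed.

Lemma greedy_prefix_frequent k : frequent_prefix [] -> frequent_prefix (greedy_prefix k).
Proof.
  intro G0. induction k as [|k IH]; trivial. cbn.
  destruct excluded_middle_informative as [G|G]; trivial.
  destruct (frequent_prefix_extend _ IH); tauto.
Qed.

Lemma greedy_prefix_nth k i :
  (i < k)%nat -> nth i (greedy_prefix k) 0 = nth i (greedy_prefix (S i)) 0.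
Proof.
  induction k as [|k IH]; intro H; [lia|].
  destruct (Nat.eq_dec i k) as [->|Ne]; trivial.
  rewrite <- IH by lia. cbn.
  destruct excluded_middle_informative; rewrite app_nth1; trivial;
    rewrite greedy_prefix_length; lia.
Qed.

Lemma cluster_point :
  exists f, forall K M, exists N, (M <= N)%nat /\ forall i, (i < K)%nat -> F N i = f i.
Proof.
  exists (fun i => nth i (greedy_prefix (S i)) 0). intros K M.
  assert (G0 : frequent_prefix []) by (intro M'; exists M'; cbn; split; [lia|intros; lia]).
  destruct (greedy_prefix_frequent K G0 M) as [N [HN HA]].
  exists N. split; trivial. intros i Hi.
  rewrite <- (greedy_prefix_nth K i Hi). apply HA. now rewrite greedy_prefix_length.
Qed.

End ClusterPoint.

Lemma downward_closed_cover (P Q : nat -> Prop) :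
  (forall K K', (K' <= K)%nat -> P K -> P K') ->
  (forall K K', (K' <= K)%nat -> Q K -> Q K') ->
  (forall K, P K \/ Q K) -> (forall K, P K) \/ (forall K, Q K).
Proof.
  intros HP HQ HPQ. destruct (classic (forall K, P K)) as [H|H]; [now left|right].
  apply not_all_ex_not in H as [K0 N0]. intro K.
  destruct (HPQ (Nat.max K K0)) as [P1|Q1].
  - exfalso. apply N0, (HP _ _ (Nat.le_max_r K K0) P1).
  - apply (HQ _ _ (Nat.le_max_l K K0) Q1).
Qed.

Section Limit.
Variables (s : addr) (u : nat -> Z) (F : nat -> nat -> Z) (f : nat -> Z).
Hypothesis Hs : s <> AInfty.
Hypothesis F_sym :
  forall N i, (i < N)%nat -> sym_at s (Nat.iter i shift (AInf (F N))) (ISym (u i)).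
Hypothesis F_off : forall N i, (i <= N)%nat -> Nat.iter i shift (AInf (F N)) <> s.
Hypothesis f_cluster :
  forall K M, exists N, (M <= N)%nat /\ forall i, (i < K)%nat -> F N i = f i.

Lemma cluster_agree K M n : exists N, (M <= N)%nat /\
  agree K (Nat.iter n shift (AInf (F N))) (Nat.iter n shift (AInf f)).
Proof.
  destruct (f_cluster (K + n) M) as [N [HN HA]]. exists N. split; trivial.
  intros i Hi. rewrite !entry_iter_shift. cbn [entry]. now rewrite HA by lia.
Qed.

(* If the limit lands on [s] at time [m], the approximants land on one side of [s]
   for arbitrarily good approximations, which forces [σ^m u] to be [K^+] or [K^-]. *)
Lemma limit_hits_s_kneading m : (1 <= m)%nat -> Nat.iter m shift (AInf f) = s ->
  exists W, Itin s s (SInf W) /\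
    ((forall i, u (i + m)%nat = splus (W i)) \/ (forall i, u (i + m)%nat = sminus (W i))).
Proof.
  intros Hm E.
  set (Y N := Nat.iter m shift (AInf (F N))).
  assert (HY : forall N, Y N <> AInfty) by (intro N; unfold Y; now rewrite iter_shift_AInf).
  assert (HW : forall i, exists e, sym_at s (Nat.iter i shift s) e).
  { intro i. apply sym_at_exists; trivial.
    rewrite <- E, <- Nat.iter_add, iter_shift_AInf. discriminate. }
  destruct (choice _ HW) as [W HWs]. exists W. split; [exact HWs|].
  set (Above K := exists N, (m + K <= N)%nat /\ agree K (Y N) s /\ addr_lt s (Y N)).
  set (Below K := exists N, (m + K <= N)%nat /\ agree K (Y N) s /\ addr_lt (Y N) s).
  assert (Sym : forall N i, (i + m < N)%nat ->
                sym_at s (Nat.iter i shift (Y N)) (ISym (u (i + m)%nat))).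
  { intros N i Hi. unfold Y. rewrite <- Nat.iter_add. apply F_sym. exact Hi. }
  destruct (downward_closed_cover Above Below) as [HAbove|HBelow].
  - intros K K' L [N [HN [Ag Lt]]]. exists N. split; [lia|]. split; trivial.
    exact (agree_weaken _ _ _ _ L Ag).
  - intros K K' L [N [HN [Ag Lt]]]. exists N. split; [lia|]. split; trivial.
    exact (agree_weaken _ _ _ _ L Ag).
  - intro K. destruct (cluster_agree K (m + K) m) as [N [HN Ag]]. rewrite E in Ag.
    destruct (addr_lt_trichotomy (Y N) s (HY N) Hs) as [Q|[Q|Q]].
    + now destruct (F_off N m ltac:(lia)).
    + right. exists N. auto.
    + left. exists N. auto.
  - left. intro i. destruct (sym_at_right_nbhd s _ _ Hs (HWs i)) as [B HB].
    destruct (HAbove (i + B + 1)%nat) as [N [HN [Ag L]]].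
    apply (HB (Nat.iter i shift (Y N))); [|apply (addr_lt_iter_shift (i + B + 1))|apply Sym];
      trivial; try lia.
    + apply (agree_weaken (i + B + 1 - i)); [lia|]. now apply agree_iter_shift.
    + now apply agree_sym.
  - right. intro i. destruct (sym_at_left_nbhd s _ _ Hs (HWs i)) as [B HB].
    destruct (HBelow (i + B + 1)%nat) as [N [HN [Ag L]]].
    apply (HB (Nat.iter i shift (Y N))); [|apply (addr_lt_iter_shift (i + B + 1))|apply Sym];
      trivial; try lia.
    apply (agree_weaken (i + B + 1 - i)); [lia|]. now apply agree_iter_shift.
Qed.

Lemma limit_itin : (forall m, (1 <= m)%nat -> Nat.iter m shift (AInf f) <> s) ->
  Itin s (AInf f) (SInf (fun n => ISym (u n))).
Proof.
  intros Off n. set (X := Nat.iter n shift (AInf f)).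
  assert (HX : X <> AInfty) by (unfold X; now rewrite iter_shift_AInf).
  assert (Nbnd : forall k, acons k s <> X).
  { intros k E. apply (Off (S n)); [lia|].
    rewrite Nat.iter_succ. fold X. now rewrite <- E, shift_acons. }
  assert (Approx : forall K, exists c, agree K c X /\ sym_at s c (ISym (u n))).
  { intro K. destruct (cluster_agree K (S n) n) as [N [HN Ag]].
    exists (Nat.iter n shift (AInf (F N))). split; trivial. apply F_sym. lia. }
  split; [exact HX|]. rewrite !bnd_acons by exact Hs. split.
  - destruct (addr_lt_trichotomy (acons (u n) s) X (acons_not_infty _ _ Hs) HX)
      as [E|[L|L]]; [now destruct (Nbnd _ E)|exact L|exfalso].
    apply (not_lt_of_approx_above (acons (u n) s) X); trivial.
    intro K. destruct (Approx K) as [c [Ac [_ [Lc _]]]]. rewrite bnd_acons in Lc; eauto.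
  - destruct (addr_lt_trichotomy X (acons (u n + 1) s) HX (acons_not_infty _ _ Hs))
      as [E|[L|L]]; [now destruct (Nbnd _ (eq_sym E))|exact L|exfalso].
    apply (not_lt_of_approx_below (acons (u n + 1) s) X); trivial.
    intro K. destruct (Approx K) as [c [Ac [_ [_ Uc]]]]. rewrite bnd_acons in Uc; eauto.
Qed.

End Limit.

Lemma itin_inf_exists s u : s <> AInfty ->
  (forall m W, (1 <= m)%nat -> Itin s s (SInf W) ->
     ~ (forall i, u (i + m)%nat = splus (W i)) /\ ~ (forall i, u (i + m)%nat = sminus (W i))) ->
  exists f, Itin s (AInf f) (SInf (fun n => ISym (u n))).
Proof.
  intros Hs Hno. destruct (exists_off_orbit s) as [g Hg].
  destruct (choice (fun N f => (forall i, (i < N)%nat ->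
                                  sym_at s (Nat.iter i shift (AInf f)) (ISym (u i))) /\
                               (forall i, (i <= N)%nat -> Nat.iter i shift (AInf f) <> s)))
    as [F HF].
  { intro N. destruct (itin_approximant s g Hs Hg N u) as [f [_ Hf]]. eauto. }
  assert (Hbits : forall N i, (i < N)%nat -> F N i = u i \/ F N i = u i + 1).
  { intros N i Hi. destruct (sym_at_iter_AInf s (F N) i (u i) Hs (proj1 (HF N) i Hi)) as [[]|[]];
      auto. }
  destruct (cluster_point u (fun i => u i + 1) F Hbits) as [f Hf].
  exists f. apply (limit_itin s u F f Hs); trivial; [intros; apply HF; trivial|].
  intros m Hm E.
  destruct (limit_hits_s_kneading s u F f Hs (fun N => proj1 (HF N)) (fun N => proj2 (HF N))
             Hf m Hm E)
    as [W [HW [P|P]]]; [exact (proj1 (Hno m W Hm HW) P)|exact (proj2 (Hno m W Hm HW) P)].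
Qed.

(** * Periodic itineraries *)

Lemma uniform_bound (P : nat -> nat -> Prop) n :
  (forall d l l', (l <= l')%nat -> P d l -> P d l') ->
  (forall d, (d < n)%nat -> exists l, P d l) -> exists M, forall d, (d < n)%nat -> P d M.
Proof.
  intros Mon. induction n as [|n IH]; intro H; [exists 0%nat; intros; lia|].
  destruct IH as [M HM]; [intros d Hd; apply H; lia|].
  destruct (H n ltac:(lia)) as [l Hl]. exists (Nat.max M l). intros d Hd.
  destruct (Nat.eq_dec d n) as [->|Ne].
  - apply (Mon n l); [lia|exact Hl].
  - apply (Mon d M); [lia|apply HM; lia].
Qed.

Lemma downward_closed_pigeonhole (P : nat -> nat -> Prop) n :
  (forall d k k', (k' <= k)%nat -> P d k -> P d k') ->
  (forall k, exists d, (d < n)%nat /\ P d k) -> exists d, (d < n)%nat /\ forall k, P d k.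
Proof.
  intros Mon. induction n as [|n IH]; intro H.
  - destruct (H 0%nat) as [d [Hd _]]. lia.
  - destruct (classic (forall k, P n k)) as [Hn|Hn]; [exists n; split; [lia|exact Hn]|].
    apply not_all_ex_not in Hn as [k0 Hk0].
    destruct IH as [d [Hd Hk]]; [|exists d; split; [lia|exact Hk]].
    intro k. destruct (H (Nat.max k k0)) as [d [Hd Hdk]].
    destruct (Nat.eq_dec d n) as [->|Ne].
    + exfalso. apply Hk0, (Mon n _ _ (Nat.le_max_r k k0) Hdk).
    + exists d. split; [lia|exact (Mon d _ _ (Nat.le_max_l k k0) Hdk)].
Qed.

Lemma pigeonhole_seq {T} (L : list T) (w : nat -> T) N : (forall k, In (w k) L) ->
  exists i j, (N <= i < j)%nat /\ (j <= N + length L)%nat /\ w i = w j.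
Proof.
  intro HL. apply NNPP. intro Hn.
  assert (ND : NoDup (map w (seq N (S (length L))))).
  { apply NoDup_map_NoDup_ForallPairs; [|apply seq_NoDup].
    intros i j Hi Hj E. apply in_seq in Hi, Hj.
    destruct (Nat.lt_total i j) as [Q|[Q|Q]]; trivial; exfalso; apply Hn.
    - exists i, j. repeat split; auto; lia.
    - exists j, i. repeat split; auto; lia. }
  assert (Inc : incl (map w (seq N (S (length L)))) L).
  { intros x Hx. apply in_map_iff in Hx as [k [<- _]]. apply HL. }
  pose proof (NoDup_incl_length ND Inc) as Q. rewrite length_map, length_seq in Q. lia.
Qed.

Lemma backward_injective_periodic {T} (L : list T) (w : nat -> T) :
  (forall k, In (w k) L) -> (forall k l, w (S k) = w (S l) -> w k = w l) ->
  exists d, (1 <= d)%nat /\ forall k, w k = w (k + d)%nat.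
Proof.
  intros HL Hb.
  assert (Down : forall d k l, (k <= l)%nat -> w l = w (l + d)%nat -> w k = w (k + d)%nat).
  { intros d k l Hkl. induction l as [|l IH]; intro E.
    - now replace k with 0%nat by lia.
    - destruct (Nat.eq_dec k (S l)) as [->|Ne]; trivial. apply IH; [lia|]. now apply Hb. }
  destruct (downward_closed_pigeonhole (fun d k => w k = w (k + S d)%nat) (length L))
    as [d [_ Hd]].
  - intros d k k' Hk. now apply Down.
  - intro k. destruct (pigeonhole_seq L w k HL) as [i [j [Hij [Hj E]]]].
    exists (j - i - 1)%nat. split; [lia|].
    apply (Down _ k i); [lia|]. now replace (i + S (j - i - 1))%nat with j by lia.
  - exists (S d). split; [lia|exact Hd].
Qed.

Fixpoint two_choices (l : list Z) : list (list Z) :=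
  match l with
  | [] => [[]]
  | x :: l => map (cons x) (two_choices l) ++ map (cons (x + 1)) (two_choices l)
  end.

Lemma in_two_choices {A} (h v : A -> Z) l :
  (forall x, In x l -> h x = v x \/ h x = v x + 1) -> In (map h l) (two_choices (map v l)).
Proof.
  induction l as [|x l IH]; intro H; [now left|]. cbn. apply in_or_app.
  destruct (H x (or_introl eq_refl)) as [E|E]; rewrite E; [left|right];
    apply in_map, IH; intros y Hy; apply H; now right.
Qed.

Section Solutions.
Variables (s : addr) (u : nat -> Z).
Hypothesis Hs : s <> AInfty.

Let solution (f : nat -> Z) : Prop := Itin s (AInf f) (SInf (fun n => ISym (u n))).

Lemma solution_bits f n : solution f -> f n = u n \/ f n = u n + 1.
Proof. intro Hf. destruct (sym_at_iter_AInf s f n (u n) Hs (Hf n)) as [[]|[]]; auto. Qed.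

Section Window.
Variable D : nat.
Hypothesis mismatch :
  forall m, ~ (forall i, (i < D)%nat -> sym_at s (Nat.iter i shift s) (ISym (u (m + 1 + i)%nat))).

(* If [f m < f' m] although the next [D] entries agree, the tails after [m] squeeze
   [s] between them, so [σ^(m+1) u] would agree with [K(s)] for [D] symbols. *)
Lemma solution_entry_split f f' m : solution f -> solution f' ->
  (forall j, (1 <= j <= D)%nat -> f (m + j)%nat = f' (m + j)%nat) ->
  f m = u m -> f' m = u m + 1 -> False.
Proof.
  intros Sf Sf' Ag Em Em'.
  set (T := Nat.iter (S m) shift (AInf f')). set (T' := Nat.iter (S m) shift (AInf f)).
  assert (LT : addr_lt T s).
  { destruct (sym_at_iter_AInf s f' m (u m) Hs (Sf' m)) as [[E _]|[_ L]]; [lia|exact L]. }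
  assert (LT' : addr_lt s T').
  { destruct (sym_at_iter_AInf s f m (u m) Hs (Sf m)) as [[_ L]|[E _]]; [exact L|lia]. }
  assert (AgT : agree D T T').
  { intros i Hi. unfold T, T'. rewrite !entry_iter_shift. cbn [entry].
    replace (i + S m)%nat with (m + S i)%nat by lia. rewrite Ag by lia. reflexivity. }
  assert (AgTs : agree D T s) by exact (agree_between _ _ _ _ LT LT' AgT).
  assert (AgsT : agree D s T') by (intros i Hi; rewrite <- AgTs, AgT by exact Hi; reflexivity).
  apply (mismatch m). intros i Hi.
  assert (Sym : forall g, solution g ->
    sym_at s (Nat.iter i shift (Nat.iter (S m) shift (AInf g))) (ISym (u (m + 1 + i)%nat))).
  { intros g Sg. rewrite <- Nat.iter_add. replace (m + 1 + i)%nat with (i + S m)%nat by lia.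
    apply Sg. }
  apply (sym_at_between s (Nat.iter i shift T) (Nat.iter i shift T')); [apply Sym; trivial..| |].
  - exact (addr_lt_iter_shift D i _ _ LT AgTs Hi).
  - exact (addr_lt_iter_shift D i _ _ LT' AgsT Hi).
Qed.

Lemma solution_entry_determined f f' m : solution f -> solution f' ->
  (forall j, (1 <= j <= D)%nat -> f (m + j)%nat = f' (m + j)%nat) -> f m = f' m.
Proof.
  intros Sf Sf' Ag.
  destruct (solution_bits f m Sf) as [E|E], (solution_bits f' m Sf') as [E'|E']; try congruence;
    exfalso; [exact (solution_entry_split f f' m Sf Sf' Ag E E')|].
  apply (solution_entry_split f' f m Sf' Sf); trivial. intros j Hj. symmetry. auto.
Qed.

Lemma solution_prefix_determined f f' N : solution f -> solution f' ->
  (forall j, (N < j <= N + D)%nat -> f j = f' j) -> forall j, (j <= N + D)%nat -> f j = f' j.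
Proof.
  intros Sf Sf' HN.
  assert (H : forall d j, (N + 1 - d <= j <= N + D)%nat -> f j = f' j).
  { induction d as [|d IH]; intros j Hj.
    - apply HN. lia.
    - destruct (Nat.eq_dec j (N - d)%nat) as [->|Ne]; [|apply IH; lia].
      apply solution_entry_determined; trivial. intros t Ht. apply IH. lia. }
  intros j Hj. apply (H (N + 1)%nat). lia.
Qed.

End Window.

Section Periodic.
Variable p : nat.
Hypothesis Hp : (1 <= p)%nat.
Hypothesis u_periodic : forall i, u (i + p)%nat = u i.
Hypothesis u_not_kneading :
  forall m, (1 <= m)%nat -> ~ (forall i, sym_at s (Nat.iter i shift s) (ISym (u (i + m)%nat))).

Lemma u_periodic_mul k i : u (i + k * p)%nat = u i.
Proof.
  induction k as [|k IH]; [now rewrite Nat.add_0_r|].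
  replace (i + S k * p)%nat with (i + k * p + p)%nat by lia. now rewrite u_periodic.
Qed.

Lemma window_bound : exists D, forall m,
  ~ (forall i, (i < D)%nat -> sym_at s (Nat.iter i shift s) (ISym (u (m + 1 + i)%nat))).
Proof.
  destruct (uniform_bound (fun m D => ~ (forall i, (i < D)%nat ->
              sym_at s (Nat.iter i shift s) (ISym (u (m + 1 + i)%nat)))) p) as [D HD].
  - intros m D D' L H Hall. apply H. intros i Hi. apply Hall. lia.
  - intros m _. apply NNPP. intro N. apply (u_not_kneading (S m) ltac:(lia)). intro i.
    apply NNPP. intro Ni. apply N. exists (S i). intro Hall. apply Ni.
    replace (i + S m)%nat with (m + 1 + i)%nat by lia. apply Hall. lia.
  - exists D. intros m Hall. apply (HD (m mod p)%nat); [apply Nat.mod_upper_bound; lia|].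
    intros i Hi. rewrite <- (u_periodic_mul (m / p) (m mod p + 1 + i)).
    replace (m mod p + 1 + i + m / p * p)%nat with (m + 1 + i)%nat; [auto|].
    pose proof (Nat.div_mod_eq m p). lia.
Qed.

Lemma solution_shift_period f k : solution f -> solution (fun t => f (t + k * p)%nat).
Proof.
  intros Sf n. rewrite iter_shift_AInf, <- (u_periodic_mul k n).
  replace (AInf (fun i => f (i + n + k * p)%nat)) with (Nat.iter (n + k * p) shift (AInf f)).
  - apply Sf.
  - rewrite iter_shift_AInf. f_equal. apply functional_extensionality. intro i. f_equal. lia.
Qed.

(* The windows [f (kp + 1 .. kp + D)] take finitely many values and each window determines
   the previous one, so they recur periodically; recurring windows then pin down [f]. *)
Lemma solution_periodic f : solution f ->
  exists n, (1 <= n)%nat /\ Nat.iter n shift (AInf f) = AInf f.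
Proof.
  intro Sf. destruct window_bound as [D HD].
  set (g k := fun t => f (t + k * p)%nat).
  assert (Sg : forall k, solution (g k)) by (intro k; now apply solution_shift_period).
  set (win k := map (g k) (seq 1 D)).
  assert (Hin : forall k, In (win k) (two_choices (map u (seq 1 D)))).
  { intro k. apply in_two_choices. intros j _. now apply solution_bits. }
  assert (Back : forall k l, win (S k) = win (S l) -> win k = win l).
  { intros k l E. apply map_ext_in_iff. intros j Hj. apply in_seq in Hj.
    apply (solution_prefix_determined D HD (g k) (g l) p); trivial; [|lia].
    intros t Ht. apply map_ext_in_iff with (a := (t - p)%nat) in E; [|apply in_seq; lia].
    unfold g in E |- *. replace (t - p + S k * p)%nat with (t + k * p)%nat in E by lia.
    now replace (t - p + S l * p)%nat with (t + l * p)%nat in E by lia. }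
  destruct (backward_injective_periodic _ win Hin Back) as [d [Hd Hw]].
  assert (Ef : forall m, f m = g d m).
  { intro m. apply (solution_prefix_determined D HD f (g d) (m * p)); trivial; [|nia].
    intros j Hj. specialize (Hw m). apply map_ext_in_iff with (a := (j - m * p)%nat) in Hw;
      [|apply in_seq; lia].
    unfold g in Hw |- *. replace (j - m * p + m * p)%nat with j in Hw by lia.
    rewrite Hw. f_equal. nia. }
  exists (d * p)%nat. split; [nia|]. rewrite iter_shift_AInf. f_equal.
  apply functional_extensionality. intro i. symmetry. apply Ef.
Qed.

End Periodic.
End Solutions.

Definition avoids_kneading (s : addr) (u : sseq Z) : Prop :=
  forall k, (1 <= k)%nat -> forall w, Itin s s w ->
    sshiftn k u <> Some (smap splus w) /\ sshiftn k u <> Some (smap sminus w).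

Lemma avoids_kneading_SInf s u : avoids_kneading s (SInf u) ->
  forall m W, (1 <= m)%nat -> Itin s s (SInf W) ->
    ~ (forall i, u (i + m)%nat = splus (W i)) /\ ~ (forall i, u (i + m)%nat = sminus (W i)).
Proof.
  intros H m W Hm HW. destruct (H m Hm (SInf W) HW) as [N1 N2].
  split; intro E; [apply N1|apply N2]; cbn; do 2 f_equal;
    apply functional_extensionality; exact E.
Qed.

Lemma avoids_kneading_SFin s l : avoids_kneading s (SFin l) ->
  forall k, (1 <= k <= length l)%nat -> ~ Itin s s (SFin (map ISym (skipn k l))).
Proof.
  intros H k Hk I. apply (proj1 (H k ltac:(lia) _ I)). cbn.
  destruct (Nat.leb_spec k (length l)); [|lia].
  rewrite map_map. cbn. now rewrite map_id.
Qed.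

Lemma itin_SInf_is_AInf s r v : Itin s r (SInf v) -> exists f, r = AInf f.
Proof.
  intro I. destruct r as [f|l h|]; eauto; exfalso.
  - destruct (I (S (length l))) as [N _]. apply N, iter_shift_AInt.
  - now destruct (I 0%nat).
Qed.

Lemma itin_infty_AInf u : Itin AInfty (AInf u) (SInf (fun n => ISym (u n))).
Proof.
  intro k. apply sym_at_infty_ISym_iff. rewrite iter_shift_AInf.
  exists (AInf (fun i => u (S i + k)%nat)). split; [easy|].
  cbn. f_equal. apply functional_extensionality. now intros [|i].
Qed.

Lemma itin_infty_AInf_unique r u :
  Itin AInfty r (SInf (fun n => ISym (u n))) -> r = AInf u.
Proof.
  intro I. destruct (itin_SInf_is_AInf _ _ _ I) as [f ->]. f_equal.
  apply functional_extensionality. intro k.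
  destruct (proj1 (sym_at_infty_ISym_iff _ _) (I k)) as [y [Hy E]].
  apply (f_equal (fun a => entry a 0)) in E.
  rewrite entry_iter_shift, entry_acons_0 in E by exact Hy.
  cbn [entry Nat.add] in E. apply Some_inj in E. lia.
Qed.

Lemma itin_exists s u : avoids_kneading s u -> exists r, Itin s r (smap ISym u).
Proof.
  intro H. destruct (classic (s = AInfty)) as [->|Hs], u as [u|l].
  - exists (AInf u). apply itin_infty_AInf.
  - destruct l as [|a l].
    + exists AInfty. split; [cbn; lia|reflexivity].
    + exfalso. apply (avoids_kneading_SFin _ _ H (length (a :: l))); [cbn; lia|].
      rewrite skipn_all. split; [cbn; lia|reflexivity].
  - destruct (itin_inf_exists s u Hs (avoids_kneading_SInf s u H)) as [f Hf]. eauto.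
  - exact (itin_fin_exists s l Hs (avoids_kneading_SFin s l H)).
Qed.

Lemma itin_periodic s u r :
  avoids_kneading s u -> speriodic u -> Itin s r (smap ISym u) -> aperiodic r.
Proof.
  intros H [n [Hn Eu]] I. destruct u as [u|l]; cbn in Eu.
  2:{ destruct (Nat.leb_spec n (length l)); [|discriminate].
      injection Eu as Eu. apply (f_equal (@length _)) in Eu. rewrite length_skipn in Eu. lia. }
  injection Eu as Eu. assert (Hper : forall i, u (i + n)%nat = u i).
  { intro i. exact (f_equal (fun g => g i) Eu). }
  destruct (itin_SInf_is_AInf _ _ _ I) as [f ->]. split; [easy|].
  destruct (classic (s = AInfty)) as [->|Hs].
  - apply itin_infty_AInf_unique in I. injection I as <-. exists n. split; trivial.
    rewrite iter_shift_AInf. f_equal. apply functional_extensionality. exact Hper.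
  - apply (solution_periodic s u Hs n Hn Hper); trivial.
    intros m Hm Hall. apply (proj1 (avoids_kneading_SInf s u H m _ Hm Hall)). reflexivity.
Qed.

Theorem lemma3p6 (s : addr) :
  (forall u : sseq Z,
     (forall k : nat, (1 <= k)%nat -> forall w : sseq isym, Itin s s w ->
        sshiftn k u <> Some (smap splus w) /\ sshiftn k u <> Some (smap sminus w)) ->
     (exists r : addr, Itin s r (smap ISym u)) /\
     (speriodic u -> forall r : addr, Itin s r (smap ISym u) -> aperiodic r)) /\
  (forall (t : addr) (k : nat) (r r' : addr),
     in_preimage k t r -> in_preimage k t r' ->
     forall v : sseq isym, Itin s r v -> Itin s r' v -> r = r') /\
  (forall r r' : addr, is_intermediate r -> is_intermediate r' ->
     forall v : sseq isym, Itin s r v -> Itin s r' v -> r = r').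
Proof.
  split; [|split].
  - intros u H. split; [now apply itin_exists|].
    intros Hper r. now apply itin_periodic.
  - intros t k r r' P P' v. exact (itin_preimage_unique s t k r r' v P P').
  - intros r r' Ir Ir' v. exact (itin_intermediate_unique s r r' v Ir Ir').
Qed.
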